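(* Let $\mathcal K$ be a variety of WHB-algebras that has a tense companion $\mathcal N$. Then $\mathcal K$ has the finite model property if and only if $\mathcal N$ has the finite model property.
   Context: A WHB-algebra is an algebra $(A,\wedge,\vee,\to,\leftarrow,0,1)$ such that $(A,\wedge,\vee,0,1)$ is a bounded distributive lattice and for all $a,b,c\in A$: $a\to a=1$; $a\to(b\wedge c)=(a\to b)\wedge(a\to c)$; $(a\vee b)\to c=(a\to c)\wedge(b\to c)$; $(a\to b)\wedge(b\to c)\le a\to c$; $a\leftarrow a=0$; $(a\vee b)\leftarrow c=(a\leftarrow c)\vee(b\leftarrow c)$; $a\leftarrow(b\wedge c)=(a\leftarrow b)\vee(a\leftarrow c)$; $a\leftarrow c\le(a\leftarrow b)\vee(b\leftarrow c)$; $a\wedge((a\to b)\leftarrow 0)\le b$; $a\le b\vee(1\to(a\leftarrow b))$. A tense algebra is $(\mathbf B,G,H)$ with $\mathbf B$ a Boolean algebra and unary $G,H$ such that, with $P(x)=\neg H(\neg x)$, $F(x)=\neg G(\neg x)$: $P(x)\le y\iff x\le G(y)$ and $F(x)\le y\iff x\le H(y)$. $M(\mathbf B,G,H)$ is the WHB-algebra on $B$ with $x\to y=G(\neg x\vee y)$, $x\leftarrow y=P(x\wedge\neg y)$. For a WHB-algebra $\mathbf A$: $X(\mathbf A)$ is its set of prime filters, $\sigma_{\mathbf A}(a)=\{P\colon a\in P\}$, $\tau_{\mathbf A}$ the topology with subbase $\{\sigma_{\mathbf A}(a)\}\cup\{X(\mathbf A)\setminus\sigma_{\mathbf A}(a)\}$;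 $(P,Q)\in R_{\mathbf A}$ iff for all $a,b$ ($a\to b\in P$, $a\in Q$ imply $b\in Q$); $(P,Q)\in S_{\mathbf A}$ iff for all $a,b$ ($a\in Q$, $b\notin Q$ imply $a\leftarrow b\in P$); $T(\mathbf A)$ is the Boolean algebra of $\tau_{\mathbf A}$-clopen subsets of $X(\mathbf A)$ with $G_{\mathbf A}(U)=\{P\colon R_{\mathbf A}(P)\subseteq U\}$, $H_{\mathbf A}(U)=\{P\colon S_{\mathbf A}(P)\subseteq U\}$. A variety $\mathcal N$ of tense algebras is a tense companion of a variety $\mathcal K$ of WHB-algebras if $T(\mathbf A)\in\mathcal N$ for all $\mathbf A\in\mathcal K$ and $M(\mathbf B)\in\mathcal K$ for all $\mathbf B\in\mathcal N$. A variety has the finite model property if every equation failing in some member fails in some finite member. *)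

From Stdlib Require Import List Classical ClassicalDescription.
Import ListNotations.
Set Implicit Arguments.

Inductive wterm : Type :=
| wvar : nat -> wterm
| wmeet : wterm -> wterm -> wterm
| wjoin : wterm -> wterm -> wterm
| wimp : wterm -> wterm -> wterm
| wcoimp : wterm -> wterm -> wterm
| wzero : wterm
| wone : wterm.

Inductive tterm : Type :=
| tvar : nat -> tterm
| tmeet : tterm -> tterm -> tterm
| tjoin : tterm -> tterm -> tterm
| tneg : tterm -> tterm
| tzero : tterm
| tone : tterm
| tG : tterm -> tterm
| tH : tterm -> tterm.

Record whb_ops : Type := WhbOps {
  wcar : Type;
  wm : wcar -> wcar -> wcar;
  wj : wcar -> wcar -> wcar;
  wi : wcar -> wcar -> wcar;
  wc : wcar -> wcar -> wcar;
  w0 : wcar;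
  w1 : wcar }.

Record tense_ops : Type := TenseOps {
  tcar : Type;
  tm : tcar -> tcar -> tcar;
  tj : tcar -> tcar -> tcar;
  tn : tcar -> tcar;
  t0 : tcar;
  t1 : tcar;
  tGo : tcar -> tcar;
  tHo : tcar -> tcar }.

Fixpoint weval (A : whb_ops) (v : nat -> wcar A) (t : wterm) : wcar A :=
  match t with
  | wvar n => v n
  | wmeet s u => wm A (weval A v s) (weval A v u)
  | wjoin s u => wj A (weval A v s) (weval A v u)
  | wimp s u => wi A (weval A v s) (weval A v u)
  | wcoimp s u => wc A (weval A v s) (weval A v u)
  | wzero => w0 A
  | wone => w1 A
  end.

Fixpoint teval (B : tense_ops) (v : nat -> tcar B) (t : tterm) : tcar B :=
  match t with
  | tvar n => v n
  | tmeet s u => tm B (teval B v s) (teval B v u)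
  | tjoin s u => tj B (teval B v s) (teval B v u)
  | tneg s => tn B (teval B v s)
  | tzero => t0 B
  | tone => t1 B
  | tG s => tGo B (teval B v s)
  | tH s => tHo B (teval B v s)
  end.

Definition wsat (A : whb_ops) (e : wterm * wterm) : Prop :=
  forall v : nat -> wcar A, weval A v (fst e) = weval A v (snd e).

Definition tsat (B : tense_ops) (e : tterm * tterm) : Prop :=
  forall v : nat -> tcar B, teval B v (fst e) = teval B v (snd e).

Definition bdl_axioms (T : Type) (m j : T -> T -> T) (z o : T) : Prop :=
  (forall a b c, m a (m b c) = m (m a b) c) /\
  (forall a b, m a b = m b a) /\
  (forall a b c, j a (j b c) = j (j a b) c) /\
  (forall a b, j a b = j b a) /\
  (forall a b, m a (j a b) = a) /\
  (forall a b, j a (m a b) = a) /\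
  (forall a b c, m a (j b c) = j (m a b) (m a c)) /\
  (forall a, j a z = a) /\
  (forall a, m a o = a).

Definition wle (A : whb_ops) (a b : wcar A) : Prop := wm A a b = a.

Definition is_whb (A : whb_ops) : Prop :=
  bdl_axioms (wm A) (wj A) (w0 A) (w1 A) /\
  (forall a, wi A a a = w1 A) /\
  (forall a b c, wi A a (wm A b c) = wm A (wi A a b) (wi A a c)) /\
  (forall a b c, wi A (wj A a b) c = wm A (wi A a c) (wi A b c)) /\
  (forall a b c, wle A (wm A (wi A a b) (wi A b c)) (wi A a c)) /\
  (forall a, wc A a a = w0 A) /\
  (forall a b c, wc A (wj A a b) c = wj A (wc A a c) (wc A b c)) /\
  (forall a b c, wc A a (wm A b c) = wj A (wc A a b) (wc A a c)) /\
  (forall a b c, wle A (wc A a c) (wj A (wc A a b) (wc A b c))) /\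
  (forall a b, wle A (wm A a (wc A (wi A a b) (w0 A))) b) /\
  (forall a b, wle A a (wj A b (wi A (w1 A) (wc A a b)))).

Definition tle (B : tense_ops) (a b : tcar B) : Prop := tm B a b = a.
Definition tP (B : tense_ops) (x : tcar B) : tcar B := tn B (tHo B (tn B x)).
Definition tF (B : tense_ops) (x : tcar B) : tcar B := tn B (tGo B (tn B x)).

Definition is_boolean (B : tense_ops) : Prop :=
  bdl_axioms (tm B) (tj B) (t0 B) (t1 B) /\
  (forall a, tm B a (tn B a) = t0 B) /\
  (forall a, tj B a (tn B a) = t1 B).

Definition is_tense (B : tense_ops) : Prop :=
  is_boolean B /\
  (forall x y, tle B (tP B x) y <-> tle B x (tGo B y)) /\
  (forall x y, tle B (tF B x) y <-> tle B x (tHo B y)).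

Definition whb_variety (K : whb_ops -> Prop) : Prop :=
  exists E : wterm * wterm -> Prop,
    forall A, K A <-> (is_whb A /\ forall e, E e -> wsat A e).

Definition tense_variety (N : tense_ops -> Prop) : Prop :=
  exists E : tterm * tterm -> Prop,
    forall B, N B <-> (is_tense B /\ forall e, E e -> tsat B e).

Definition M (B : tense_ops) : whb_ops :=
  {| wcar := tcar B;
     wm := tm B;
     wj := tj B;
     wi := fun x y => tGo B (tj B (tn B x) y);
     wc := fun x y => tP B (tm B x (tn B y));
     w0 := t0 B;
     w1 := t1 B |}.

Section TConstruction.
Variable A : whb_ops.

Definition prime_filter (P : wcar A -> Prop) : Prop :=
  P (w1 A) /\
  (forall a b, P a -> wle A a b -> P b) /\
  (forall a b, P a -> P b -> P (wm A a b)) /\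
  ~ P (w0 A) /\
  (forall a b, P (wj A a b) -> P a \/ P b).

Definition Xp : Type := { P : wcar A -> Prop | prime_filter P }.

Definition sigmaA (a : wcar A) : Xp -> Prop := fun P => proj1_sig P a.

(* Subbasic sets: (a, true) stands for sigma_A(a), (a, false) for its
   complement X(A) \ sigma_A(a). *)
Definition subbasic (c : wcar A * bool) : Xp -> Prop :=
  fun P => if snd c then sigmaA (fst c) P else ~ sigmaA (fst c) P.

(* Open sets of the topology tau_A generated by the subbase: unions of finite
   intersections of subbasic sets. *)
Definition tau_open (U : Xp -> Prop) : Prop :=
  forall x, U x ->
    exists l : list (wcar A * bool),
      (forall c, In c l -> subbasic c x) /\
      (forall y, (forall c, In c l -> subbasic c y) -> U y).

Definition clopen (U : Xp -> Prop) : Prop :=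
  tau_open U /\ tau_open (fun x => ~ U x).

Definition RA (P Q : Xp) : Prop :=
  forall a b, proj1_sig P (wi A a b) -> proj1_sig Q a -> proj1_sig Q b.

Definition SA (P Q : Xp) : Prop :=
  forall a b, proj1_sig Q a -> ~ proj1_sig Q b -> proj1_sig P (wc A a b).

Definition GA (U : Xp -> Prop) : Xp -> Prop :=
  fun P => forall Q, RA P Q -> U Q.
Definition HA (U : Xp -> Prop) : Xp -> Prop :=
  fun P => forall Q, SA P Q -> U Q.

Definition Clop : Type := { U : Xp -> Prop | clopen U }.

Lemma full_clopen : clopen (fun _ => True).
Proof.
  split.
  - intros x _. exists nil. split; [intros c []| auto].
  - intros x H. exfalso. exact (H I).
Qed.

(* It is the identity on
   clopen sets; all the uses below are on sets that are clopen (for G_A and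
   H_A by the results of the paper), so the fallback value is never used in
   the intended reading. *)
Definition toClop (V : Xp -> Prop) : Clop :=
  match excluded_middle_informative (clopen V) with
  | left h => exist _ V h
  | right _ => exist _ (fun _ => True) full_clopen
  end.

Definition T : tense_ops :=
  {| tcar := Clop;
     tm := fun U V => toClop (fun x => proj1_sig U x /\ proj1_sig V x);
     tj := fun U V => toClop (fun x => proj1_sig U x \/ proj1_sig V x);
     tn := fun U => toClop (fun x => ~ proj1_sig U x);
     t0 := toClop (fun _ => False);
     t1 := toClop (fun _ => True);
     tGo := fun U => toClop (GA (proj1_sig U));
     tHo := fun U => toClop (HA (proj1_sig U)) |}.

End TConstruction.

Definition tense_companion (K : whb_ops -> Prop) (N : tense_ops -> Prop) : Prop :=
  (forall A, K A -> N (T A)) /\ (forall B, N B -> K (M B)).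

Definition wfinite (A : whb_ops) : Prop := exists l : list (wcar A), forall x, In x l.
Definition tfinite (B : tense_ops) : Prop := exists l : list (tcar B), forall x, In x l.

Definition whb_fmp (K : whb_ops -> Prop) : Prop :=
  forall e : wterm * wterm,
    (exists A, K A /\ ~ wsat A e) -> exists A, K A /\ wfinite A /\ ~ wsat A e.

Definition tense_fmp (N : tense_ops -> Prop) : Prop :=
  forall e : tterm * tterm,
    (exists B, N B /\ ~ tsat B e) -> exists B, N B /\ tfinite B /\ ~ tsat B e.

(* Both directions go through the embeddings [a |-> sigma(a)] of [A] into [M(T(A))] and of [B]
   into [T(M(B))], and through the fact that [T] preserves finiteness ([M] does not change the
   carrier).  A WHB-equation failing in [A] becomes, reading [a -> b] as [G(~a \/ b)] and [a <- b]
   as [P(a /\ ~b)], a tense equation failing in [T(A)], hence in some finite [B] in N, and then the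
   WHB-equation fails in the finite [M(B)].
   Conversely, a tense term evaluated in [T(A)] at generators [sigma(a)] is a finite intersection
   of sets [sigma(a)^c \/ sigma(b)]: [G] and [H] send such an intersection to the intersection of
   the [sigma(a -> b)], resp. of the [sigma(a <- b)^c], because prime filters have enough R- and
   S-successors.  So a tense equation holds in [T(A)] at such a valuation iff finitely many
   WHB-equations, computed from the two terms alone, hold in [A].  A tense equation failing in [B]
   thus gives a WHB-equation failing in [M(B)], hence in some finite [A'] in K, and the tense
   equation fails in the finite [T(A')]. *)

From Stdlib Require Import List Classical ClassicalDescription FunctionalExtensionality PropExtensionality.
From mathcomp Require classical_sets.
Import ListNotations.

Set Implicit Arguments.

Lemma pred_ext (X : Type) (U V : X -> Prop) : (forall x, U x <-> V x) -> U = V.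
Proof.
  intro UV. apply functional_extensionality. intro x. apply propositional_extensionality, UV.
Qed.

Lemma forall_in_single (X : Type) (x : X) (F : X -> Prop) :
  (forall y, In y [x] -> F y) <-> F x.
Proof.
  split; [intro H; apply H; left; reflexivity | intros Fx y [<- | []]; exact Fx].
Qed.

Lemma forall_in_app (X : Type) (l1 l2 : list X) (F : X -> Prop) :
  (forall x, In x (l1 ++ l2) -> F x) <-> (forall x, In x l1 -> F x) /\ (forall x, In x l2 -> F x).
Proof.
  split.
  - intro H. split; intros x xl; apply H, in_or_app; [left | right]; exact xl.
  - intros [H1 H2] x xl. apply in_app_or in xl as [xl | xl]; [apply H1 | apply H2]; exact xl.
Qed.

Lemma zorn_nonempty_chains (T : Type) (P : (T -> Prop) -> Prop) :
  (exists X, P X) ->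
  (forall F : (T -> Prop) -> Prop, (exists X, F X) -> (forall X, F X -> P X) ->
     (forall X Y, F X -> F Y -> (forall x, X x -> Y x) \/ (forall x, Y x -> X x)) ->
     P (fun x => exists2 X, F X & X x)) ->
  exists A, P A /\ forall B, P B -> (forall x, A x -> B x) -> forall x, B x -> A x.
Proof.
  intros [X0 PX0] Pchains.
  (* [Zorn_bigcup] also asks for the union of the empty chain, so the empty set joins the family. *)
  set (P' := fun X : T -> Prop => P X \/ forall x, ~ X x).
  destruct (classical_sets.Zorn_bigcup (P := P')) as [A [P'A Amax]].
  - intros F FP' Ftot.
    destruct (classic (exists X x, F X /\ X x)) as [[X [x [FX Xx]]] | Fempty].
    + left.
      replace (classical_sets.bigcup F (fun X => X))
        with (fun x => exists2 Y, F Y /\ (exists y, Y y) & Y x).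
      * apply Pchains.
        -- exists X. split; [exact FX | exists x; exact Xx].
        -- intros Y [FY [y Yy]]. destruct (FP' Y FY) as [PY | Yempty]; [exact PY |].
           destruct (Yempty y Yy).
        -- intros Y Z [FY _] [FZ _]. exact (Ftot Y Z FY FZ).
      * apply pred_ext. intro y.
        split; [intros [Y [FY _] Yy]; exists Y; assumption |].
        intros [Y FY Yy]. exists Y; [split; [exact FY | exists y; exact Yy] | exact Yy].
    + right. intros x [X FX Xx]. apply Fempty. exists X, x. split; assumption.
  - assert (PA : P A).
    { destruct P'A as [PA | Aempty]; [exact PA |].
      destruct (classic (exists x, X0 x)) as [[x X0x] | X0empty].
      - exfalso. apply (Amax X0); [| left; exact PX0].
        split; [intros y Ay; destruct (Aempty y Ay) |].
        intros X0A. exact (Aempty x (X0A x X0x)).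
      - replace A with X0; [exact PX0 |].
        apply pred_ext. intro y.
        split; intro H; [destruct X0empty; exists y; exact H | destruct (Aempty y H)]. }
    exists A. split; [exact PA |]. intros B PB AB x Bx.
    apply NNPP. intro nAx. apply (Amax B); [| left; exact PB].
    split; [exact AB |]. intro BA. exact (nAx (BA x Bx)).
Qed.

(** * Bounded distributive lattices and prime filters *)

Section Lattice.
Context {A : whb_ops}.
Hypothesis lat : bdl_axioms (wm A) (wj A) (w0 A) (w1 A).
Local Notation m := (wm A).
Local Notation j := (wj A).
Local Notation le := (wle A).

Lemma meetA a b c : m a (m b c) = m (m a b) c. Proof. apply lat. Qed.
Lemma meetC a b : m a b = m b a. Proof. apply lat. Qed.
Lemma joinC a b : j a b = j b a. Proof. apply lat. Qed.
Lemma meet_joinK a b : m a (j a b) = a. Proof. apply lat. Qed.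
Lemma join_meetK a b : j a (m a b) = a. Proof. apply lat. Qed.
Lemma meet_joinr a b c : m a (j b c) = j (m a b) (m a c). Proof. apply lat. Qed.
Lemma join0 a : j a (w0 A) = a. Proof. apply lat. Qed.
Lemma meet1 a : m a (w1 A) = a. Proof. apply lat. Qed.

Lemma meet_id a : m a a = a.
Proof. rewrite <- (join_meetK a a) at 2. apply meet_joinK. Qed.

Lemma wle_refl a : le a a.
Proof. apply meet_id. Qed.

Lemma wle_trans a b c : le a b -> le b c -> le a c.
Proof. unfold wle. intros ab bc. rewrite <- ab, <- meetA, bc. reflexivity. Qed.

Lemma wle_antisym a b : le a b -> le b a -> a = b.
Proof. unfold wle. intros ab ba. rewrite <- ab, meetC. exact ba. Qed.

Lemma wle_meetl a b : le (m a b) a.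
Proof. unfold wle. rewrite (meetC (m a b) a), meetA, meet_id. reflexivity. Qed.

Lemma wle_meetr a b : le (m a b) b.
Proof. unfold wle. rewrite <- meetA, meet_id. reflexivity. Qed.

Lemma wle_meet a b c : le c a -> le c b -> le c (m a b).
Proof. unfold wle. intros ca cb. rewrite meetA, ca, cb. reflexivity. Qed.

Lemma wle_joinl a b : le a (j a b).
Proof. apply meet_joinK. Qed.

Lemma wle_joinr a b : le b (j a b).
Proof. rewrite joinC. apply wle_joinl. Qed.

Lemma wle_join a b c : le a c -> le b c -> le (j a b) c.
Proof.
  unfold wle. intros ac bc. rewrite meetC, meet_joinr, (meetC c a), (meetC c b), ac, bc.
  reflexivity.
Qed.

Lemma wle0 a : le (w0 A) a.
Proof. unfold wle. rewrite <- (join0 a) at 1. rewrite joinC. apply meet_joinK. Qed.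

Lemma wle1 a : le a (w1 A).
Proof. apply meet1. Qed.

Lemma wle_meet2r a b c : le a b -> le (m a c) (m b c).
Proof.
  intro ab. apply wle_meet; [apply (wle_trans (wle_meetl a c) ab) | apply wle_meetr].
Qed.

Lemma join_idr a b : le a b -> j a b = b.
Proof. unfold wle. intro ab. rewrite <- ab, joinC, meetC. apply join_meetK. Qed.

Lemma complement_unique a b c :
  m a b = w0 A -> j a b = w1 A -> m a c = w0 A -> j a c = w1 A -> b = c.
Proof.
  (* [b = b /\ (a \/ c) = (b /\ a) \/ (b /\ c) = b /\ c], and symmetrically. *)
  assert (half : forall b c, m a b = w0 A -> j a c = w1 A -> le b c).
  { intros b' c' ab' ac'. unfold wle.
    rewrite <- (meet1 b') at 2. rewrite <- ac', meet_joinr, (meetC b' a), ab', joinC, join0.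
    reflexivity. }
  intros ab jab ac jac. apply wle_antisym; apply half; assumption.
Qed.

Section PrimeFilter.
Variable Q : Xp A.

Lemma pf_1 : proj1_sig Q (w1 A).
Proof. apply (proj2_sig Q). Qed.

Lemma pf_0 : ~ proj1_sig Q (w0 A).
Proof. apply (proj2_sig Q). Qed.

Lemma pf_up a b : proj1_sig Q a -> le a b -> proj1_sig Q b.
Proof. apply (proj2_sig Q). Qed.

Lemma pf_meet a b : proj1_sig Q (m a b) <-> proj1_sig Q a /\ proj1_sig Q b.
Proof.
  split.
  - intro Qab. split; apply (pf_up Qab); [apply wle_meetl | apply wle_meetr].
  - intros [Qa Qb]. apply (proj2_sig Q); assumption.
Qed.

Lemma pf_join a b : proj1_sig Q (j a b) <-> proj1_sig Q a \/ proj1_sig Q b.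
Proof.
  split; [apply (proj2_sig Q) |].
  intros [Qa | Qb]; [apply (pf_up Qa), wle_joinl | apply (pf_up Qb), wle_joinr].
Qed.

End PrimeFilter.
End Lattice.
(* [ent] will be [<=], [fun u v => u -> v in P] and [fun u v => u <- v notin P]. *)
Section PrimeFilterExtension.
Context {A : whb_ops}.
Hypothesis lat : bdl_axioms (wm A) (wj A) (w0 A) (w1 A).
Variable ent : wcar A -> wcar A -> Prop.
Hypothesis ent_refl : forall x, ent x x.
Hypothesis ent_trans : forall x y z, ent x y -> ent y z -> ent x z.
Hypothesis ent_mono : forall x x' y y', wle A x' x -> ent x y -> wle A y y' -> ent x' y'.
Hypothesis ent_meet : forall x y y', ent x y -> ent x y' -> ent x (wm A y y').
Hypothesis ent_join : forall x y z, ent x z -> ent y z -> ent (wj A x y) z.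

Definition ent_filter (G : wcar A -> Prop) : Prop :=
  (forall x y, G x -> G y -> G (wm A x y)) /\ (forall x y, G x -> ent x y -> G y).

Lemma ent_of_wle x y : wle A x y -> ent x y.
Proof. intro xy. exact (ent_mono (wle_refl lat x) (ent_refl x) xy). Qed.

Variables a b : wcar A.

Definition ent_separating (G : wcar A -> Prop) : Prop := ent_filter G /\ G a /\ ~ G b.

Lemma maximal_ent_separating_prime G :
  ent_separating G ->
  (forall G', ent_separating G' -> (forall x, G x -> G' x) -> forall x, G' x -> G x) ->
  prime_filter A G.
Proof.
  intros [[Gmeet Gent] [Ga Gb]] Gmax.
  assert (Gup : forall x y, G x -> wle A x y -> G y).
  { intros x y Gx xy. exact (Gent x y Gx (ent_of_wle xy)). }
  (* Maximality: adjoining any [c] outside [G] makes [b] reachable. *)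
  assert (escape : forall c, ~ G c -> exists2 g, G g & ent (wm A g c) b).
  { intros c Gc. apply NNPP. intro no_g.
    apply Gc, (Gmax (fun y => exists2 g, G g & ent (wm A g c) y)).
    - split; [split | split].
      + intros x y [g1 G1 e1] [g2 G2 e2]. exists (wm A g1 g2); [apply Gmeet; assumption |].
        apply ent_meet.
        * apply (ent_mono (wle_meet2r lat c (wle_meetl lat g1 g2)) e1 (wle_refl lat x)).
        * apply (ent_mono (wle_meet2r lat c (wle_meetr lat g1 g2)) e2 (wle_refl lat y)).
      + intros x y [g Gg e] xy. exists g; [exact Gg | exact (ent_trans e xy)].
      + exists a; [exact Ga | apply ent_of_wle, wle_meetl, lat].
      + intros [g Gg e]. apply no_g. exists g; assumption.
    - intros x Gx. exists x; [exact Gx | apply ent_of_wle, wle_meetl, lat].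
    - exists a; [exact Ga | apply ent_of_wle, wle_meetr, lat]. }
  split; [| split; [exact Gup | split; [exact Gmeet | split]]].
  - exact (Gup a _ Ga (wle1 lat a)).
  - intro G0. exact (Gb (Gup _ b G0 (wle0 lat b))).
  - intros c d Gcd. apply NNPP. intro neither.
    destruct (escape c) as [g1 G1 e1]; [tauto |].
    destruct (escape d) as [g2 G2 e2]; [tauto |].
    apply Gb, (Gent (wm A (wm A g1 g2) (wj A c d))); [apply Gmeet; [apply Gmeet |]; assumption |].
    rewrite (meet_joinr lat). apply ent_join.
    + exact (ent_mono (wle_meet2r lat c (wle_meetl lat g1 g2)) e1 (wle_refl lat b)).
    + exact (ent_mono (wle_meet2r lat d (wle_meetr lat g1 g2)) e2 (wle_refl lat b)).
Qed.

Theorem prime_filter_of_not_ent :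
  ~ ent a b ->
  exists Q : Xp A, proj1_sig Q a /\ ~ proj1_sig Q b /\
    forall x y, ent x y -> proj1_sig Q x -> proj1_sig Q y.
Proof.
  intro nab.
  destruct (@zorn_nonempty_chains _ ent_separating) as [G [Gsep Gmax]].
  - exists (ent a). split; [split | split].
    + exact (@ent_meet a).
    + intros x y. exact (@ent_trans a x y).
    + exact (ent_refl a).
    + exact nab.
  - intros F [X FX] Fsep Ftot.
    assert (Ffilter : forall Y, F Y -> ent_filter Y) by (intros Y FY; apply (Fsep Y FY)).
    split; [split | split].
    + intros x y [X1 F1 x1] [X2 F2 y2].
      destruct (Ftot X1 X2 F1 F2) as [sub | sub].
      * exists X2; [exact F2 |]. apply (Ffilter X2 F2); [apply sub |]; assumption.
      * exists X1; [exact F1 |]. apply (Ffilter X1 F1); [| apply sub]; assumption.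
    + intros x y [X1 F1 x1] xy. exists X1; [exact F1 | exact (proj2 (Ffilter X1 F1) x y x1 xy)].
    + exists X; [exact FX | apply (Fsep X FX)].
    + intros [X1 F1 b1]. exact (proj2 (proj2 (Fsep X1 F1)) b1).
  - exists (exist _ G (maximal_ent_separating_prime Gsep Gmax)). simpl.
    destruct Gsep as [[_ Gent] [Ga Gb]].
    split; [exact Ga | split; [exact Gb |]]. intros x y xy Gx. exact (Gent x y Gx xy).
Qed.

End PrimeFilterExtension.

Lemma wle_of_prime_filters (A : whb_ops) (lat : bdl_axioms (wm A) (wj A) (w0 A) (w1 A)) a b :
  (forall Q : Xp A, proj1_sig Q a -> proj1_sig Q b) -> wle A a b.
Proof.
  intro ab. apply NNPP. intro nab.
  assert (wle_mono : forall x x' y y', wle A x' x -> wle A x y -> wle A y y' -> wle A x' y').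
  { intros x x' y y' x'x xy yy'. exact (wle_trans lat x'x (wle_trans lat xy yy')). }
  destruct (prime_filter_of_not_ent lat (wle A) (wle_refl lat) (wle_trans lat) wle_mono
              (fun _ _ _ h h' => wle_meet lat h h')
              (fun _ _ _ h h' => wle_join lat h h') a b nab)
    as [Q [Qa [Qb _]]].
  exact (Qb (ab Q Qa)).
Qed.

(** * The clopen algebra [T(A)] *)

Section Clopens.
Variable A : whb_ops.

Lemma clopen_ext (U V : Xp A -> Prop) : (forall x, U x <-> V x) -> clopen U -> clopen V.
Proof. intro UV. replace V with U by (apply pred_ext, UV). trivial. Qed.

Lemma tau_open_and (U V : Xp A -> Prop) :
  tau_open U -> tau_open V -> tau_open (fun x => U x /\ V x).
Proof.
  intros Uo Vo x [Ux Vx].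
  destruct (Uo x Ux) as [l1 [x1 U1]], (Vo x Vx) as [l2 [x2 V2]].
  exists (l1 ++ l2). split.
  - apply forall_in_app. split; assumption.
  - intros y y12. apply forall_in_app in y12 as [y1 y2]. split; [apply U1 | apply V2]; assumption.
Qed.

Lemma tau_open_or (U V : Xp A -> Prop) :
  tau_open U -> tau_open V -> tau_open (fun x => U x \/ V x).
Proof.
  intros Uo Vo x [Ux | Vx];
    [destruct (Uo x Ux) as [l [xl Ul]] | destruct (Vo x Vx) as [l [xl Vl]]];
    exists l; split; auto.
Qed.

Lemma clopen_neg (U : Xp A -> Prop) : clopen U -> clopen (fun x => ~ U x).
Proof.
  intros [Uo nUo]. split; [exact nUo |].
  replace (fun x => ~ ~ U x) with U; [exact Uo |].
  apply pred_ext. intro x. split; [tauto | apply NNPP].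
Qed.

Lemma clopen_and (U V : Xp A -> Prop) :
  clopen U -> clopen V -> clopen (fun x => U x /\ V x).
Proof.
  intros [Uo nUo] [Vo nVo]. split; [exact (tau_open_and Uo Vo) |].
  replace (fun x => ~ (U x /\ V x)) with (fun x => ~ U x \/ ~ V x); [exact (tau_open_or nUo nVo) |].
  apply pred_ext. intro x. destruct (classic (U x)); tauto.
Qed.

Lemma clopen_or (U V : Xp A -> Prop) :
  clopen U -> clopen V -> clopen (fun x => U x \/ V x).
Proof.
  intros Uc Vc. apply (clopen_ext (U := fun x => ~ (~ U x /\ ~ V x))).
  - intro x. destruct (classic (U x)); tauto.
  - exact (clopen_neg (clopen_and (clopen_neg Uc) (clopen_neg Vc))).
Qed.

Lemma clopen_False : clopen (fun _ : Xp A => False).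
Proof. apply (clopen_ext (U := fun _ => ~ True)); [tauto | exact (clopen_neg (@full_clopen A))]. Qed.

Lemma clopen_sigmaA (a : wcar A) : clopen (sigmaA a).
Proof.
  split; [intros x xa; exists [(a, true)] | intros x xa; exists [(a, false)]];
    (split; [apply forall_in_single; exact xa | intros y ya; exact (proj1 (forall_in_single _ _) ya)]).
Qed.

Lemma clopen_forall_in (X : Type) (F : X -> Xp A -> Prop) (l : list X) :
  (forall x, clopen (F x)) -> clopen (fun P => forall x, In x l -> F x P).
Proof.
  intro Fc. induction l as [| x l IH].
  - apply (clopen_ext (U := fun _ => True)); [intro P; split; [intros _ x [] | trivial] |].
    apply (@full_clopen A).
  - apply (clopen_ext (U := fun P => F x P /\ forall y, In y l -> F y P)).
    + intro P. split; [intros [Fx Fl] y [<- | yl]; auto | intro H; split; [apply H; left | intros y yl; apply H; right]; trivial].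
    + exact (clopen_and (Fc x) IH).
Qed.

Lemma toClop_spec (V : Xp A -> Prop) : clopen V -> forall x, proj1_sig (toClop V) x <-> V x.
Proof.
  intros Vc x. unfold toClop.
  destruct (excluded_middle_informative (clopen V)); [reflexivity | contradiction].
Qed.

Lemma Clop_ext (U V : Clop A) : (forall x, proj1_sig U x <-> proj1_sig V x) -> U = V.
Proof.
  destruct U as [U Uc], V as [V Vc]. simpl. intro UV.
  apply pred_ext in UV. subst V. f_equal. apply proof_irrelevance.
Qed.

Lemma in_T_meet (U V : Clop A) x :
  proj1_sig (tm (T A) U V) x <-> proj1_sig U x /\ proj1_sig V x.
Proof. apply toClop_spec, clopen_and; apply proj2_sig. Qed.

Lemma in_T_join (U V : Clop A) x :
  proj1_sig (tj (T A) U V) x <-> proj1_sig U x \/ proj1_sig V x.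
Proof. apply toClop_spec, clopen_or; apply proj2_sig. Qed.

Lemma in_T_neg (U : Clop A) x : proj1_sig (tn (T A) U) x <-> ~ proj1_sig U x.
Proof. apply toClop_spec, clopen_neg, proj2_sig. Qed.

Lemma in_T_zero x : proj1_sig (t0 (T A)) x <-> False.
Proof. apply toClop_spec, clopen_False. Qed.

Lemma in_T_one x : proj1_sig (t1 (T A)) x <-> True.
Proof. apply toClop_spec, (@full_clopen A). Qed.

Definition sigmaT (a : wcar A) : Clop A := toClop (sigmaA a).

Lemma in_sigmaT a x : proj1_sig (sigmaT a) x <-> proj1_sig x a.
Proof. apply toClop_spec, clopen_sigmaA. Qed.

End Clopens.

Arguments sigmaT : clear implicits.

Section SigmaLattice.
Context {A : whb_ops}.
Hypothesis lat : bdl_axioms (wm A) (wj A) (w0 A) (w1 A).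

Lemma sigmaT_meet a b : sigmaT A (wm A a b) = tm (T A) (sigmaT A a) (sigmaT A b).
Proof. apply Clop_ext. intro P. rewrite in_T_meet, !in_sigmaT. apply (pf_meet lat). Qed.

Lemma sigmaT_join a b : sigmaT A (wj A a b) = tj (T A) (sigmaT A a) (sigmaT A b).
Proof. apply Clop_ext. intro P. rewrite in_T_join, !in_sigmaT. apply (pf_join lat). Qed.

Lemma sigmaT_zero : sigmaT A (w0 A) = t0 (T A).
Proof. apply Clop_ext. intro P. rewrite in_T_zero, in_sigmaT. split; [apply pf_0 | contradiction]. Qed.

Lemma sigmaT_one : sigmaT A (w1 A) = t1 (T A).
Proof. apply Clop_ext. intro P. rewrite in_T_one, in_sigmaT. split; [trivial | intros _; apply pf_1]. Qed.

Lemma sigmaT_inj a b : sigmaT A a = sigmaT A b -> a = b.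
Proof.
  intro ab.
  assert (same : forall Q : Xp A, proj1_sig Q a <-> proj1_sig Q b).
  { intro Q. rewrite <- !in_sigmaT, ab. reflexivity. }
  apply (wle_antisym lat); apply (wle_of_prime_filters lat); intro Q; apply same.
Qed.

End SigmaLattice.

Definition imp_family (A : whb_ops) (X : Type) (l : list X) (f g : X -> wcar A) (Q : Xp A) : Prop :=
  forall x, In x l -> proj1_sig Q (f x) -> proj1_sig Q (g x).

Section WHBAlgebra.
Variable A : whb_ops.
Hypothesis whbA : is_whb A.
Let lat : bdl_axioms (wm A) (wj A) (w0 A) (w1 A) := proj1 whbA.
Local Notation le := (wle A).

Lemma imp_id a : wi A a a = w1 A. Proof. apply whbA. Qed.
Lemma imp_meet a b c : wi A a (wm A b c) = wm A (wi A a b) (wi A a c). Proof. apply whbA. Qed.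
Lemma imp_join a b c : wi A (wj A a b) c = wm A (wi A a c) (wi A b c). Proof. apply whbA. Qed.
Lemma imp_trans a b c : le (wm A (wi A a b) (wi A b c)) (wi A a c). Proof. apply whbA. Qed.
Lemma coimp_id a : wc A a a = w0 A. Proof. apply whbA. Qed.
Lemma coimp_join a b c : wc A (wj A a b) c = wj A (wc A a c) (wc A b c). Proof. apply whbA. Qed.
Lemma coimp_meet a b c : wc A a (wm A b c) = wj A (wc A a b) (wc A a c). Proof. apply whbA. Qed.
Lemma coimp_trans a b c : le (wc A a c) (wj A (wc A a b) (wc A b c)). Proof. apply whbA. Qed.

Lemma imp_le x x' y y' : le x' x -> le y y' -> le (wi A x y) (wi A x' y').
Proof.
  intros x'x yy'. apply (wle_trans lat (b := wi A x' y)).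
  - unfold wle. rewrite (meetC lat), <- imp_join, (join_idr lat x'x). reflexivity.
  - unfold wle. rewrite <- imp_meet, yy'. reflexivity.
Qed.

Lemma coimp_le x x' y y' : le x x' -> le y' y -> le (wc A x y) (wc A x' y').
Proof.
  intros xx' y'y. apply (wle_trans lat (b := wc A x' y)).
  - rewrite <- (join_idr lat xx'), coimp_join. apply (wle_joinl lat).
  - rewrite <- y'y, coimp_meet. apply (wle_joinr lat).
Qed.

Section Successors.
Variable P : Xp A.

Lemma R_successor a b :
  ~ proj1_sig P (wi A a b) -> exists Q, RA P Q /\ proj1_sig Q a /\ ~ proj1_sig Q b.
Proof.
  intro nab.
  destruct (prime_filter_of_not_ent lat (fun u v => proj1_sig P (wi A u v))) with (a := a) (b := b)
    as [Q [Qa [Qb PQ]]]; try assumption.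
  - intro x. rewrite imp_id. apply pf_1.
  - intros x y z xy yz. refine (pf_up P _ (imp_trans x y z)). apply (pf_meet lat). split; assumption.
  - intros x x' y y' x'x xy yy'. exact (pf_up P xy (imp_le x'x yy')).
  - intros x y y' xy xy'. rewrite imp_meet. apply (pf_meet lat). split; assumption.
  - intros x y z xz yz. rewrite imp_join. apply (pf_meet lat). split; assumption.
  - exists Q. split; [exact PQ | split; assumption].
Qed.

Lemma S_successor a b :
  proj1_sig P (wc A a b) -> exists Q, SA P Q /\ proj1_sig Q a /\ ~ proj1_sig Q b.
Proof.
  intro ab.
  destruct (prime_filter_of_not_ent lat (fun u v => ~ proj1_sig P (wc A u v))) with (a := a) (b := b)
    as [Q [Qa [Qb PQ]]].
  - intro x. rewrite coimp_id. apply pf_0.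
  - intros x y z xy yz xz.
    destruct (proj1 (pf_join lat P _ _) (pf_up P xz (coimp_trans x y z))); contradiction.
  - intros x x' y y' x'x xy yy' x'y'. exact (xy (pf_up P x'y' (coimp_le x'x yy'))).
  - intros x y y' xy xy'. rewrite coimp_meet, (pf_join lat). tauto.
  - intros x y z xz yz. rewrite coimp_join, (pf_join lat). tauto.
  - tauto.
  - exists Q. split; [| split; assumption].
    intros u v Qu Qv. apply NNPP. intro uv. exact (Qv (PQ u v uv Qu)).
Qed.

Lemma GA_imp_family (X : Type) (l : list X) (f g : X -> wcar A) :
  GA (imp_family l f g) P <-> forall x, In x l -> proj1_sig P (wi A (f x) (g x)).
Proof.
  split.
  - intros PG x xl. apply NNPP. intro nfg.
    destruct (R_successor _ _ nfg) as [Q [PQ [Qf Qg]]]. exact (Qg (PG Q PQ x xl Qf)).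
  - intros Pfg Q PQ x xl Qf. exact (PQ _ _ (Pfg x xl) Qf).
Qed.

Lemma HA_imp_family (X : Type) (l : list X) (f g : X -> wcar A) :
  HA (imp_family l f g) P <-> forall x, In x l -> ~ proj1_sig P (wc A (f x) (g x)).
Proof.
  split.
  - intros PH x xl Pfg.
    destruct (S_successor _ _ Pfg) as [Q [PQ [Qf Qg]]]. exact (Qg (PH Q PQ x xl Qf)).
  - intros Pfg Q PQ x xl Qf. apply NNPP. intro Qg. exact (Pfg x xl (PQ _ _ Qf Qg)).
Qed.

End Successors.

Lemma in_T_G_family (U : Clop A) (X : Type) (l : list X) (f g : X -> wcar A) :
  (forall Q, proj1_sig U Q <-> imp_family l f g Q) ->
  forall P, proj1_sig (tGo (T A) U) P <-> forall x, In x l -> proj1_sig P (wi A (f x) (g x)).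
Proof.
  intro U_fam.
  assert (GU : GA (proj1_sig U) = fun P => forall x, In x l -> sigmaA (wi A (f x) (g x)) P).
  { replace (proj1_sig U) with (imp_family l f g) by (symmetry; apply pred_ext, U_fam).
    apply pred_ext. intro Q. apply GA_imp_family. }
  intro P. simpl. rewrite GU, toClop_spec; [reflexivity |].
  apply clopen_forall_in. intro x. apply clopen_sigmaA.
Qed.

Lemma in_T_H_family (U : Clop A) (X : Type) (l : list X) (f g : X -> wcar A) :
  (forall Q, proj1_sig U Q <-> imp_family l f g Q) ->
  forall P, proj1_sig (tHo (T A) U) P <-> forall x, In x l -> ~ proj1_sig P (wc A (f x) (g x)).
Proof.
  intro U_fam.
  assert (HU : HA (proj1_sig U) = fun P => forall x, In x l -> ~ sigmaA (wc A (f x) (g x)) P).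
  { replace (proj1_sig U) with (imp_family l f g) by (symmetry; apply pred_ext, U_fam).
    apply pred_ext. intro Q. apply HA_imp_family. }
  intro P. simpl. rewrite HU, toClop_spec; [reflexivity |].
  apply clopen_forall_in. intro x. apply clopen_neg, clopen_sigmaA.
Qed.

Lemma imp_family_single (a b : wcar A) (Q : Xp A) :
  imp_family [tt] (fun _ => a) (fun _ => b) Q <-> (proj1_sig Q a -> proj1_sig Q b).
Proof. apply (forall_in_single tt (fun _ => proj1_sig Q a -> proj1_sig Q b)). Qed.

Lemma in_T_G_single (U : Clop A) a b :
  (forall Q, proj1_sig U Q <-> (proj1_sig Q a -> proj1_sig Q b)) ->
  forall P, proj1_sig (tGo (T A) U) P <-> proj1_sig P (wi A a b).
Proof.
  intros U_ab P.
  rewrite (in_T_G_family U (l := [tt]) (f := fun _ => a) (g := fun _ => b)); [apply forall_in_single |].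
  intro Q. rewrite U_ab, imp_family_single. reflexivity.
Qed.

Lemma in_T_H_single (U : Clop A) a b :
  (forall Q, proj1_sig U Q <-> (proj1_sig Q a -> proj1_sig Q b)) ->
  forall P, proj1_sig (tHo (T A) U) P <-> ~ proj1_sig P (wc A a b).
Proof.
  intros U_ab P.
  rewrite (in_T_H_family U (l := [tt]) (f := fun _ => a) (g := fun _ => b)); [apply forall_in_single |].
  intro Q. rewrite U_ab, imp_family_single. reflexivity.
Qed.

Lemma sigmaT_imp a b :
  sigmaT A (wi A a b) = tGo (T A) (tj (T A) (tn (T A) (sigmaT A a)) (sigmaT A b)).
Proof.
  apply Clop_ext. intro P. rewrite in_sigmaT, (in_T_G_single _ a b); [reflexivity |].
  intro Q. rewrite in_T_join, in_T_neg, !in_sigmaT. destruct (classic (proj1_sig Q a)); tauto.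
Qed.

Lemma sigmaT_coimp a b :
  sigmaT A (wc A a b) = tP (T A) (tm (T A) (sigmaT A a) (tn (T A) (sigmaT A b))).
Proof.
  apply Clop_ext. intro P. unfold tP. rewrite in_sigmaT, in_T_neg, (in_T_H_single _ a b).
  - split; [tauto | apply NNPP].
  - intro Q. rewrite in_T_neg, in_T_meet, in_T_neg, !in_sigmaT. destruct (classic (proj1_sig Q b)); tauto.
Qed.

End WHBAlgebra.

(** * The embeddings of [A] into [M(T(A))] and of [B] into [T(M(B))] *)

Definition whb_hom (A A' : whb_ops) (f : wcar A -> wcar A') : Prop :=
  (forall a b, f (wm A a b) = wm A' (f a) (f b)) /\
  (forall a b, f (wj A a b) = wj A' (f a) (f b)) /\
  (forall a b, f (wi A a b) = wi A' (f a) (f b)) /\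
  (forall a b, f (wc A a b) = wc A' (f a) (f b)) /\
  f (w0 A) = w0 A' /\ f (w1 A) = w1 A'.

Definition tense_hom (B B' : tense_ops) (f : tcar B -> tcar B') : Prop :=
  (forall a b, f (tm B a b) = tm B' (f a) (f b)) /\
  (forall a b, f (tj B a b) = tj B' (f a) (f b)) /\
  (forall a, f (tn B a) = tn B' (f a)) /\
  f (t0 B) = t0 B' /\ f (t1 B) = t1 B' /\
  (forall a, f (tGo B a) = tGo B' (f a)) /\
  (forall a, f (tHo B a) = tHo B' (f a)).

Lemma weval_hom (A A' : whb_ops) (f : wcar A -> wcar A') :
  whb_hom A A' f -> forall v t, f (weval A v t) = weval A' (fun n => f (v n)) t.
Proof.
  intros [fm [fj [fi [fc [f0 f1]]]]] v t.
  induction t; simpl; rewrite ?fm, ?fj, ?fi, ?fc, ?f0, ?f1, ?IHt1, ?IHt2; reflexivity.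
Qed.

Lemma teval_hom (B B' : tense_ops) (f : tcar B -> tcar B') :
  tense_hom B B' f -> forall v t, f (teval B v t) = teval B' (fun n => f (v n)) t.
Proof.
  intros [fm [fj [fn [f0 [f1 [fG fH]]]]]] v t.
  induction t; simpl; rewrite ?fm, ?fj, ?fn, ?f0, ?f1, ?fG, ?fH, ?IHt, ?IHt1, ?IHt2; reflexivity.
Qed.

Fixpoint tense_of_whb (t : wterm) : tterm :=
  match t with
  | wvar n => tvar n
  | wmeet s u => tmeet (tense_of_whb s) (tense_of_whb u)
  | wjoin s u => tjoin (tense_of_whb s) (tense_of_whb u)
  | wimp s u => tG (tjoin (tneg (tense_of_whb s)) (tense_of_whb u))
  | wcoimp s u => tneg (tH (tneg (tmeet (tense_of_whb s) (tneg (tense_of_whb u)))))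
  | wzero => tzero
  | wone => tone
  end.

Lemma teval_tense_of_whb (B : tense_ops) v t : teval B v (tense_of_whb t) = weval (M B) v t.
Proof. induction t; simpl; rewrite ?IHt1, ?IHt2; reflexivity. Qed.

Lemma sigmaT_whb_hom (A : whb_ops) : is_whb A -> whb_hom A (M (T A)) (sigmaT A).
Proof.
  intro whbA. pose proof (proj1 whbA) as lat.
  repeat split;
    [exact (sigmaT_meet lat) | exact (sigmaT_join lat) | exact (sigmaT_imp whbA)
    | exact (sigmaT_coimp whbA) | exact sigmaT_zero | exact sigmaT_one].
Qed.

Section BooleanAlgebra.
Variable B : tense_ops.
Hypothesis boolB : is_boolean B.
Let lat : bdl_axioms (wm (M B)) (wj (M B)) (w0 (M B)) (w1 (M B)) := proj1 boolB.

Lemma tmeet_neg a : tm B a (tn B a) = t0 B. Proof. apply boolB. Qed.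
Lemma tjoin_neg a : tj B a (tn B a) = t1 B. Proof. apply boolB. Qed.

Lemma tneg_one : tn B (t1 B) = t0 B.
Proof.
  apply (complement_unique lat (t1 B)); [apply tmeet_neg | apply tjoin_neg | |].
  - transitivity (tm B (t0 B) (t1 B)); [exact (meetC lat _ _) | exact (meet1 lat _)].
  - exact (join0 lat _).
Qed.

Lemma tneg_neg a : tn B (tn B a) = a.
Proof.
  apply (complement_unique lat (tn B a)); [apply tmeet_neg | apply tjoin_neg | |].
  - transitivity (tm B a (tn B a)); [exact (meetC lat _ _) | apply tmeet_neg].
  - transitivity (tj B a (tn B a)); [exact (joinC lat _ _) | apply tjoin_neg].
Qed.

Lemma tjoin0l a : tj B (t0 B) a = a.
Proof. transitivity (tj B a (t0 B)); [exact (joinC lat _ _) | exact (join0 lat _)]. Qed.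

Lemma tmeet1l a : tm B (t1 B) a = a.
Proof. transitivity (tm B a (t1 B)); [exact (meetC lat _ _) | exact (meet1 lat _)]. Qed.

Lemma pf_neg (Q : Xp (M B)) a : proj1_sig Q (tn B a) <-> ~ proj1_sig Q a.
Proof.
  split.
  - intros Qna Qa. apply (pf_0 Q). change (proj1_sig Q (t0 B)). rewrite <- (tmeet_neg a). apply (pf_meet lat). split; assumption.
  - intro nQa. pose proof (pf_1 Q) as Q1. simpl in Q1. rewrite <- (tjoin_neg a) in Q1.
    apply (pf_join lat) in Q1. tauto.
Qed.

Hypothesis whbMB : is_whb (M B).

Lemma sigmaT_neg a : sigmaT (M B) (tn B a) = tn (T (M B)) (sigmaT (M B) a).
Proof. apply Clop_ext. intro P. rewrite in_T_neg, !in_sigmaT. apply pf_neg. Qed.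

Lemma sigmaT_G a : sigmaT (M B) (tGo B a) = tGo (T (M B)) (sigmaT (M B) a).
Proof.
  apply Clop_ext. intro P. rewrite in_sigmaT, (in_T_G_single whbMB _ (t1 B) a).
  - simpl. rewrite tneg_one, tjoin0l. reflexivity.
  - intro Q. rewrite in_sigmaT. pose proof (pf_1 Q). tauto.
Qed.

Lemma sigmaT_H a : sigmaT (M B) (tHo B a) = tHo (T (M B)) (sigmaT (M B) a).
Proof.
  apply Clop_ext. intro P. rewrite in_sigmaT, (in_T_H_single whbMB _ (t1 B) a).
  - simpl. unfold tP. rewrite tmeet1l, tneg_neg, pf_neg. split; [tauto | apply NNPP].
  - intro Q. rewrite in_sigmaT. pose proof (pf_1 Q). tauto.
Qed.

Lemma sigmaT_tense_hom : tense_hom B (T (M B)) (sigmaT (M B)).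
Proof.
  repeat split;
    [exact (sigmaT_meet lat) | exact (sigmaT_join lat) | exact sigmaT_neg | exact sigmaT_zero
    | exact sigmaT_one | exact sigmaT_G | exact sigmaT_H].
Qed.

End BooleanAlgebra.

(** * Tense equations over [T(A)] as finitely many WHB-equations *)

Definition wsat_at (A : whb_ops) (v : nat -> wcar A) (e : wterm * wterm) : Prop :=
  weval A v (fst e) = weval A v (snd e).

Definition tsat_at (B : tense_ops) (v : nat -> tcar B) (e : tterm * tterm) : Prop :=
  teval B v (fst e) = teval B v (snd e).

(* A clause [(a, b)] denotes the clopen set [sigma(a)^c \/ sigma(b)] of prime filters, and a list
   of clauses the intersection of these sets. *)
Definition clause : Type := wterm * wterm.

Definition cjoin (l1 l2 : list clause) : list clause :=
  flat_map (fun p => map (fun q => (wmeet (fst p) (fst q), wjoin (snd p) (snd q))) l2) l1.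

Fixpoint cneg (l : list clause) : list clause :=
  match l with
  | [] => [(wone, wzero)]
  | p :: l' => cjoin [(wone, fst p); (snd p, wzero)] (cneg l')
  end.

Fixpoint cnf (t : tterm) : list clause :=
  match t with
  | tvar n => [(wone, wvar n)]
  | tmeet s u => cnf s ++ cnf u
  | tjoin s u => cjoin (cnf s) (cnf u)
  | tneg s => cneg (cnf s)
  | tzero => [(wone, wzero)]
  | tone => []
  | tG s => map (fun p => (wone, wimp (fst p) (snd p))) (cnf s)
  | tH s => map (fun p => (wcoimp (fst p) (snd p), wzero)) (cnf s)
  end.

(* Each clause [(a, b)] is eliminated by splitting on [b] being in the filter or [a] not;
   what remains, [c <= d], is the equation [c /\ d = c]. *)
Fixpoint entail_eqns (l : list clause) (c d : wterm) : list (wterm * wterm) :=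
  match l with
  | [] => [(wmeet c d, c)]
  | p :: l' => entail_eqns l' (wmeet c (snd p)) d ++ entail_eqns l' c (wjoin d (fst p))
  end.

Definition incl_eqns (l1 l2 : list clause) : list (wterm * wterm) :=
  flat_map (fun p => entail_eqns l1 (fst p) (snd p)) l2.

Definition tense_eqns (t1 t2 : tterm) : list (wterm * wterm) :=
  incl_eqns (cnf t1) (cnf t2) ++ incl_eqns (cnf t2) (cnf t1).

Section Clauses.
Variable A : whb_ops.
Hypothesis whbA : is_whb A.
Let lat : bdl_axioms (wm A) (wj A) (w0 A) (w1 A) := proj1 whbA.
Variable w : nat -> wcar A.

Definition clauses_hold (l : list clause) : Xp A -> Prop :=
  imp_family l (fun p => weval A w (fst p)) (fun p => weval A w (snd p)).

Lemma clauses_hold_cons p l P :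
  clauses_hold (p :: l) P <->
  (proj1_sig P (weval A w (fst p)) -> proj1_sig P (weval A w (snd p))) /\ clauses_hold l P.
Proof.
  split.
  - intro H. split; [apply H; left; reflexivity | intros q ql; apply H; right; exact ql].
  - intros [Hp Hl] q [<- | ql]; [exact Hp | exact (Hl q ql)].
Qed.

Lemma clauses_hold_app l1 l2 P :
  clauses_hold (l1 ++ l2) P <-> clauses_hold l1 P /\ clauses_hold l2 P.
Proof. apply forall_in_app. Qed.

Lemma clauses_hold_cjoin l1 l2 P :
  clauses_hold (cjoin l1 l2) P <-> clauses_hold l1 P \/ clauses_hold l2 P.
Proof.
  split.
  - intro H. apply NNPP. intro neither.
    destruct (not_all_ex_not _ _ (fun H1 => neither (or_introl H1))) as [p1 H1].
    destruct (not_all_ex_not _ _ (fun H2 => neither (or_intror H2))) as [p2 H2].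
    apply imply_to_and in H1 as [p1l H1], H2 as [p2l H2].
    apply imply_to_and in H1 as [a1 nb1], H2 as [a2 nb2].
    assert (pl : In (wmeet (fst p1) (fst p2), wjoin (snd p1) (snd p2)) (cjoin l1 l2)).
    { apply in_flat_map. exists p1. split; [exact p1l | apply in_map_iff; exists p2; auto]. }
    specialize (H _ pl). simpl in H. rewrite (pf_meet lat), (pf_join lat) in H. tauto.
  - intros H q ql. apply in_flat_map in ql as [p1 [p1l ql]].
    apply in_map_iff in ql as [p2 [<- p2l]]. simpl.
    rewrite (pf_meet lat), (pf_join lat).
    destruct H as [H | H]; intros [a1 a2]; [left; exact (H p1 p1l a1) | right; exact (H p2 p2l a2)].
Qed.

Lemma clauses_hold_cneg l P : clauses_hold (cneg l) P <-> ~ clauses_hold l P.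
Proof.
  pose proof (pf_1 P) as P1. pose proof (pf_0 P) as P0.
  assert (nil_holds : clauses_hold [] P) by (intros q []).
  induction l as [| p l IH]; cbn [cneg].
  - rewrite clauses_hold_cons. simpl. tauto.
  - rewrite clauses_hold_cjoin, IH, !clauses_hold_cons. simpl.
    destruct (classic (proj1_sig P (weval A w (fst p)))),
             (classic (proj1_sig P (weval A w (snd p)))); tauto.
Qed.

Lemma clauses_hold_imps l P :
  clauses_hold (map (fun p => (wone, wimp (fst p) (snd p))) l) P <->
  forall p, In p l -> proj1_sig P (wi A (weval A w (fst p)) (weval A w (snd p))).
Proof.
  split.
  - intros H p pl. apply (H (wone, wimp (fst p) (snd p))); [exact (in_map (fun p => (wone, wimp (fst p) (snd p))) _ _ pl) | apply pf_1].
  - intros H q ql. apply in_map_iff in ql as [p [<- pl]]. intros _. exact (H p pl).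
Qed.

Lemma clauses_hold_coimps l P :
  clauses_hold (map (fun p => (wcoimp (fst p) (snd p), wzero)) l) P <->
  forall p, In p l -> ~ proj1_sig P (wc A (weval A w (fst p)) (weval A w (snd p))).
Proof.
  split.
  - intros H p pl Pp. apply (pf_0 P), (H (wcoimp (fst p) (snd p), wzero)); [| exact Pp].
    exact (in_map (fun p => (wcoimp (fst p) (snd p), wzero)) _ _ pl).
  - intros H q ql. apply in_map_iff in ql as [p [<- pl]]. intro Pp. destruct (H p pl Pp).
Qed.

Lemma cnf_spec t P :
  proj1_sig (teval (T A) (fun n => sigmaT A (w n)) t) P <-> clauses_hold (cnf t) P.
Proof.
  revert P. induction t; intro P; cbn [teval cnf].
  - rewrite in_sigmaT, clauses_hold_cons. simpl. pose proof (pf_1 P).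
    assert (nil_holds : clauses_hold [] P) by (intros q []). tauto.
  - rewrite in_T_meet, IHt1, IHt2, clauses_hold_app. reflexivity.
  - rewrite in_T_join, IHt1, IHt2, clauses_hold_cjoin. reflexivity.
  - rewrite in_T_neg, IHt, clauses_hold_cneg. reflexivity.
  - rewrite in_T_zero, clauses_hold_cons. simpl. pose proof (pf_1 P). pose proof (pf_0 P). tauto.
  - rewrite in_T_one. split; [intros _ q [] | trivial].
  - rewrite (in_T_G_family whbA _ IHt), clauses_hold_imps. reflexivity.
  - rewrite (in_T_H_family whbA _ IHt), clauses_hold_coimps. reflexivity.
Qed.

Lemma entail_eqns_spec l c d :
  (forall P : Xp A, clauses_hold l P -> proj1_sig P (weval A w c) -> proj1_sig P (weval A w d)) <->
  (forall e, In e (entail_eqns l c d) -> wsat_at A w e).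
Proof.
  revert c d. induction l as [| [a b] l IH]; intros c d; cbn [entail_eqns].
  - rewrite forall_in_single. unfold wsat_at. simpl. split.
    + intro cd. apply (wle_of_prime_filters lat). intros P Pc.
      exact (cd P (fun q (q_nil : In q []) => match q_nil with end) Pc).
    + intros cd P _ Pc. exact (pf_up P Pc cd).
  - rewrite forall_in_app, <- !IH. simpl. split.
    + intro H. split.
      * intros P Pl Pcb. apply (pf_meet lat) in Pcb as [Pc Pb].
        apply (H P); [apply clauses_hold_cons; split; [intros _ |] |]; assumption.
      * intros P Pl Pc. apply (pf_join lat).
        destruct (classic (proj1_sig P (weval A w a))) as [Pa | nPa]; [right; exact Pa |].
        left. apply (H P); [apply clauses_hold_cons; split; [intro; contradiction |] |]; assumption.
    + intros [Hb Ha] P Pabl Pc. apply clauses_hold_cons in Pabl as [Pab Pl]. simpl in Pab.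
      destruct (classic (proj1_sig P (weval A w a))) as [Pa | nPa].
      * apply (Hb P Pl), (pf_meet lat). split; [exact Pc | exact (Pab Pa)].
      * destruct (proj1 (pf_join lat _ _ _) (Ha P Pl Pc)) as [Pd | Pa]; [exact Pd | contradiction].
Qed.

Lemma incl_eqns_spec l1 l2 :
  (forall P, clauses_hold l1 P -> clauses_hold l2 P) <->
  (forall e, In e (incl_eqns l1 l2) -> wsat_at A w e).
Proof.
  split.
  - intros H e e_in. apply in_flat_map in e_in as [p [pl ep]]. revert e ep.
    apply entail_eqns_spec. intros P Pl. exact (H P Pl p pl).
  - intros H P Pl p pl.
    refine (proj2 (entail_eqns_spec l1 (fst p) (snd p)) _ P Pl).
    intros e ep. apply H, in_flat_map. exists p. split; assumption.
Qed.

Lemma tsat_at_sigmaT_iff t1 t2 :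
  tsat_at (T A) (fun n => sigmaT A (w n)) (t1, t2) <->
  (forall e, In e (tense_eqns t1 t2) -> wsat_at A w e).
Proof.
  unfold tense_eqns, tsat_at. simpl.
  rewrite forall_in_app, <- !incl_eqns_spec. split.
  - intro E. split; intro P; rewrite <- !cnf_spec, E; trivial.
  - intros [H12 H21]. apply Clop_ext. intro P. rewrite !cnf_spec. split; [apply H12 | apply H21].
Qed.

End Clauses.

(** * Finiteness and the finite model property *)

Definition finite_type (X : Type) : Prop := exists l : list X, forall x, In x l.

Fixpoint sublists (X : Type) (l : list X) : list (list X) :=
  match l with
  | [] => [[]]
  | x :: r => map (cons x) (sublists r) ++ sublists r
  end.

Lemma filter_in_sublists (X : Type) (f : X -> bool) l : In (filter f l) (sublists l).
Proof.
  induction l as [| x l IH]; simpl; [left; reflexivity |].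
  destruct (f x); apply in_or_app; [left; apply in_map | right]; exact IH.
Qed.

Lemma finite_pred (X : Type) : finite_type X -> finite_type (X -> Prop).
Proof.
  intros [l l_full]. exists (map (fun s x => In x s) (sublists l)). intro U.
  apply in_map_iff.
  exists (filter (fun x => if excluded_middle_informative (U x) then true else false) l).
  split; [| apply filter_in_sublists].
  apply pred_ext. intro x. rewrite filter_In.
  destruct (excluded_middle_informative (U x)) as [Ux | nUx].
  - split; [intros _; exact Ux | intros _; split; [apply l_full | reflexivity]].
  - split; [intros [_ false_true]; discriminate false_true | contradiction].
Qed.

Lemma finite_sig (X : Type) (Q : X -> Prop) : finite_type X -> finite_type {x : X | Q x}.
Proof.
  intros [l l_full].
  exists (flat_map (fun x => match excluded_middle_informative (Q x) with
                             | left Qx => [exist Q x Qx]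
                             | right _ => []
                             end) l).
  intros [x Qx]. apply in_flat_map. exists x. split; [apply l_full |].
  destruct (excluded_middle_informative (Q x)) as [Qx' | nQx]; [| contradiction].
  left. f_equal. apply proof_irrelevance.
Qed.

Lemma T_finite (A : whb_ops) : wfinite A -> tfinite (T A).
Proof. intro finA. apply finite_sig, finite_pred, finite_sig, finite_pred, finA. Qed.

Lemma whb_fmp_of_tense_fmp (K : whb_ops -> Prop) (N : tense_ops -> Prop) :
  (forall A, K A -> is_whb A) -> (forall A, K A -> N (T A)) -> (forall B, N B -> K (M B)) ->
  tense_fmp N -> whb_fmp K.
Proof.
  intros K_whb KN NK fmpN [s1 s2] [A [KA failA]].
  destruct (not_all_ex_not _ _ failA) as [v Hv]. simpl in Hv.
  pose proof (K_whb A KA) as whbA.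
  destruct (fmpN (tense_of_whb s1, tense_of_whb s2)) as [B [NB [finB failB]]].
  - exists (T A). split; [exact (KN A KA) |]. intro sat. apply Hv, (sigmaT_inj (proj1 whbA)).
    rewrite !(weval_hom (sigmaT_whb_hom whbA)), <- !teval_tense_of_whb. exact (sat _).
  - exists (M B). split; [exact (NK B NB) | split; [exact finB |]].
    intro sat. apply failB. intro w. simpl. rewrite !teval_tense_of_whb. exact (sat w).
Qed.

Lemma tense_fmp_of_whb_fmp (K : whb_ops -> Prop) (N : tense_ops -> Prop) :
  (forall A, K A -> is_whb A) -> (forall B, N B -> is_boolean B) ->
  (forall A, K A -> N (T A)) -> (forall B, N B -> K (M B)) ->
  whb_fmp K -> tense_fmp N.
Proof.
  intros K_whb N_bool KN NK fmpK [t1 t2] [B [NB failB]].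
  destruct (not_all_ex_not _ _ failB) as [v Hv].
  pose proof (K_whb _ (NK B NB)) as whbMB.
  assert (failT : ~ tsat_at (T (M B)) (fun n => sigmaT (M B) (v n)) (t1, t2)).
  { intro E. apply Hv, (sigmaT_inj (proj1 whbMB)).
    rewrite !(teval_hom (sigmaT_tense_hom (N_bool B NB) whbMB)). exact E. }
  rewrite (tsat_at_sigmaT_iff whbMB) in failT.
  apply not_all_ex_not in failT as [e He]. apply imply_to_and in He as [e_in e_fails].
  destruct (fmpK e) as [A [KA [finA failA]]].
  { exists (M B). split; [exact (NK B NB) | intro sat; exact (e_fails (sat v))]. }
  destruct (not_all_ex_not _ _ failA) as [w Hw].
  exists (T A). split; [exact (KN A KA) | split; [exact (T_finite finA) |]].
  intro sat. exact (Hw (proj1 (tsat_at_sigmaT_iff (K_whb A KA) w t1 t2) (sat _) e e_in)).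
Qed.

Theorem theorem6p19 (K : whb_ops -> Prop) (N : tense_ops -> Prop)
  (HK : whb_variety K) (HN : tense_variety N)
  (Hcomp : tense_companion K N) :
  whb_fmp K <-> tense_fmp N.
Proof.
  destruct HK as [EK HK], HN as [EN HN], Hcomp as [KN NK].
  assert (K_whb : forall A, K A -> is_whb A) by (intros A KA; apply HK in KA; tauto).
  assert (N_bool : forall B, N B -> is_boolean B) by (intros B NB; apply HN in NB; apply NB).
  split; [apply tense_fmp_of_whb_fmp | apply whb_fmp_of_tense_fmp]; assumption.
Qed.
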